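(* Fix $n\ge1$, $\tilde J>0$, an integer $0\le m\le n-1$ and $\alpha\in(0,1)$, and let $h=\tilde J(n-m-\alpha)$. For $N\ge2$ let $J_i=\tilde J/N^i$, $1\le i\le n$. Then $$\Gamma^\star=\big[1+o_N(1)\big]\,\frac{\tilde J}{4}\,\alpha^2\,N^{m+1},\qquad N\to\infty.$$
   Context: Hierarchical lattice $\Lambda_N^n=\{1,\dots,N^n\}$; $k$-blocks are $\{jN^k+1,\dots,(j+1)N^k\}$; $d(a,b)$ is the smallest $k\ge0$ with $a,b$ in a common $k$-block. Configurations $\sigma\in\{-1,+1\}^{\Lambda_N^n}$, $\boxminus\equiv-1$, $\boxplus\equiv+1$. Hamiltonian $\mathcal H(\sigma)=-\frac12\sum_{\{v,w\},v\ne w}J_{d(v,w)}\sigma(v)\sigma(w)-\frac h2\sum_v\sigma(v)$ (sum over unordered pairs of distinct vertices). Paths consist of single spin flips; $\Phi(\sigma,\eta)=\min_{\text{paths }\sigma\to\eta}\max_{\xi\in\text{path}}\mathcal H(\xi)$; $\Gamma^\star=\Phi(\boxminus,\boxplus)-\mathcal H(\boxminus)$. *)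

From HB Require Import structures.
From mathcomp Require Import all_boot all_order all_algebra.
From mathcomp Require Import classical_sets reals topology normedtype sequences.
Set Implicit Arguments. Unset Strict Implicit. Unset Printing Implicit Defensive.
Import Order.TTheory GRing.Theory Num.Theory.
Local Open Scope ring_scope.
Local Open Scope classical_set_scope.

(* Vertices of Lambda_N^n = {1,...,N^n} are encoded 0-based as 'I_(N^n):
   vertex v : 'I_(N^n) stands for v+1.  The k-block {jN^k+1,...,(j+1)N^k}
   becomes {jN^k,...,(j+1)N^k - 1}, so two vertices are in a common
   k-block iff they have the same quotient by N^k. *)

Definition config (N n : nat) := {ffun 'I_(N ^ n) -> bool}.

Definition spin {R : nzRingType} (b : bool) : R := if b then 1 else -1.

(* d(a,b): smallest k >= 0 with a, b in a common k-block
   (always <= n for vertices of Lambda_N^n, since the n-block is everything). *)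
Definition hdist (N n : nat) (a b : nat) : nat :=
  find (fun k : nat => (a %/ N ^ k == b %/ N ^ k)%N) (iota 0 n.+1).

(* J_i = Jt / N^i  (only i >= 1 ever occurs, as d(v,w) >= 1 for v <> w). *)
Definition coupling {R : realFieldType} (Jt : R) (N i : nat) : R :=
  Jt / (N%:R ^+ i).

(* Hamiltonian: sum over unordered pairs {v,w}, v <> w, i.e. over v < w. *)
Definition ham {R : realFieldType} (N n : nat) (Jt h : R) (s : config N n) : R :=
  - (1 / 2) * (\sum_(v : 'I_(N ^ n)) \sum_(w : 'I_(N ^ n) | (v < w)%N)
                 coupling Jt N (hdist N n v w) * spin (s v) * spin (s w))
  - h / 2 * (\sum_(v : 'I_(N ^ n)) spin (s v)).

Definition minus_config (N n : nat) : config N n := [ffun => false].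
Definition plus_config (N n : nat) : config N n := [ffun => true].

Definition flip_step (N n : nat) (s t : config N n) : bool :=
  #|[set v | s v != t v]| == 1%N.

Definition path_max {R : realFieldType} (N n : nat) (Jt h : R)
  (s : config N n) (p : seq (config N n)) : R :=
  \big[Num.max/ham Jt h s]_(x <- p) ham Jt h x.

Definition comm_height {R : realType} (N n : nat) (Jt h : R)
  (s t : config N n) : R :=
  inf [set x : R | exists p : seq (config N n),
         [/\ path (@flip_step N n) s p, last s p = t & x = path_max Jt h s p]].

Definition Gamma_star {R : realType} (N n : nat) (Jt h : R) : R :=
  comm_height Jt h (minus_config N n) (plus_config N n)
  - ham Jt h (minus_config N n).

From HB Require Import structures.
From mathcomp Require Import all_boot all_order all_algebra.
From mathcomp Require Import classical_sets reals topology normedtype sequences.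
From mathcomp Require Import zify ring lra.
Import Order.TTheory GRing.Theory Num.Theory numFieldNormedType.Exports.

(* Relative to the all-minus configuration, the energy of s is the weighted cut
   between its + and - sites minus h times the number c of + sites.  Telescoping
   J_d = sum_(d <= k <= n) Jt (N^-k - N^-(k+1)) + Jt N^-(n+1) writes the coupling
   as a positive combination of the indicators "same k-block"; since c sites cut
   at least c (N^k - c) pairs inside k-blocks, only the levels k > m matter and
   H(s) - H(minus) >= Jt (alpha c - O(c / N) - c^2 / N^(m+1)).  Every path from
   minus to plus crosses c = floor (alpha N^(m+1) / 2), which gives the lower
   bound (Jt / 4) alpha^2 N^(m+1) (1 - O(1 / N)).  Conversely, flipping the sites
   in increasing order, the configuration with j + sites cuts at most
   r (N^k - r) pairs inside k-blocks (r = j mod N^k), so its energy never exceeds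
   Jt (alpha^2 N^(m+1) / 4 + m N^m). *)

Set Implicit Arguments. Unset Strict Implicit. Unset Printing Implicit Defensive.
Local Open Scope ring_scope.

Lemma count_iota_itv a L lo hi :
  count (fun i => lo <= i < hi)%N (iota a L) = (minn (a + L) hi - maxn a lo)%N.
Proof.
elim: L => [|L IH]; first by rewrite /= addn0; lia.
rewrite -addn1 iotaD count_cat IH /=.
case: (leqP lo (a + L)) => h1; case: (ltnP (a + L) hi) => h2 /=; lia.
Qed.

Lemma sum_ord_indicator (R : nzSemiRingType) T (P : pred nat) :
  \sum_(v < T) (P v)%:R = (count P (iota 0 T))%:R :> R.
Proof.
rewrite -natr_sum -sum1_count -(big_mkord xpredT (fun v => P v : nat)).
by rewrite /index_iota subn0 [in RHS]big_mkcond.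
Qed.

Lemma divn_eq_itv i d q : (0 < d)%N -> (i %/ d == q)%N = (q * d <= i < q * d + d)%N.
Proof.
move=> d_gt0; rewrite eqn_leq leq_divRL // andbC; congr (_ && _).
by rewrite -ltnS ltn_divLR // mulSn addnC.
Qed.

Lemma last_iota a k : last a (iota a.+1 k) = (a + k)%N.
Proof. by elim: k a => [|k IH] a /=; rewrite ?addn0 // IH addSnnS. Qed.

Lemma sum_ord_pairs (R : nmodType) T (F : 'I_T -> 'I_T -> R) :
  (forall v, F v v = 0) ->
  \sum_(v : 'I_T) \sum_(w : 'I_T) F v w
  = \sum_(v : 'I_T) \sum_(w : 'I_T | (v < w)%N) (F v w + F w v).
Proof.
move=> F0.
have -> : \sum_(v : 'I_T) \sum_(w : 'I_T) F v w =
    \sum_(v : 'I_T) \sum_(w : 'I_T)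
      ((if (v < w)%N then F v w else 0) + if (w < v)%N then F v w else 0).
  apply: eq_bigr => v _; apply: eq_bigr => w _.
  case: (ltngtP v w) => h; rewrite ?addr0 ?add0r //.
  by rewrite (val_inj h) F0.
under eq_bigr do rewrite big_split /=.
rewrite big_split /= [X in _ + X]exchange_big -big_split /=.
apply: eq_bigr => v _; rewrite [RHS]big_mkcond -big_split /=.
by apply: eq_bigr => w _; case: ifP => _; rewrite ?addr0.
Qed.

Lemma path_crosses (X : eqType) (e : rel X) (f : X -> nat) s p k :
  path e s p -> (forall a b, e a b -> (f b <= f a + 1)%N) ->
  (f s <= k <= f (last s p))%N -> exists2 x, x \in s :: p & f x = k.
Proof.
move=> + step; elim: p s => [|y p IH] s /=.
  by move=> _ k_eq; exists s; rewrite ?mem_head //; apply/eqP; rewrite eqn_leq.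
move=> /andP[esy py] /andP[sk kl].
case: (eqVneq (f s) k) => [<-|ne]; first by exists s; rewrite ?mem_head.
have yk : (f y <= k)%N by have := step _ _ esy; lia.
by case: (IH y py) => [|x xp fx]; [rewrite yk kl | exists x; rewrite // inE xp orbT].
Qed.

Section HierarchicalDistance.
Variables (N n v w : nat).
Hypotheses (v_lt : (v < N ^ n)%N) (w_lt : (w < N ^ n)%N).

Lemma has_common_block : has (fun k => v %/ N ^ k == w %/ N ^ k)%N (iota 0 n.+1).
Proof.
apply/hasP; exists n; first by rewrite mem_iota add0n ltnS leqnn.
by rewrite !divn_small.
Qed.

Lemma hdist_le : (hdist N n v w <= n)%N.
Proof. by have := has_common_block; rewrite has_find size_iota. Qed.

Lemma hdist_leqE k : (k <= n)%N ->
  (hdist N n v w <= k)%N = (v %/ N ^ k == w %/ N ^ k)%N.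
Proof.
move=> kn; case: leqP => hk.
  have := nth_find 0 has_common_block; rewrite nth_iota ?add0n ?ltnS ?hdist_le //.
  move=> /eqP e; apply/esym/eqP.
  by rewrite -(subnKC hk) expnD !divnMA e.
by have := before_find 0 hk; rewrite nth_iota ?add0n ?ltnS.
Qed.

Lemma hdist_gt0 : v != w -> (0 < hdist N n v w)%N.
Proof.
move=> vw; rewrite lt0n; apply: contra vw => /eqP d0.
by have := hdist_leqE (leq0n n); rewrite d0 leqnn expn0 !divn1 => /esym.
Qed.

End HierarchicalDistance.

Lemma hdist_sym N n v w : hdist N n v w = hdist N n w v.
Proof. by apply: eq_find => k; rewrite eq_sym. Qed.

Section Cuts.
Variables (R : realFieldType) (N n : nat).
Local Notation T := (N ^ n)%N.
Implicit Types (s : config N n) (K : 'I_T -> 'I_T -> R).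

Definition occ s v : R := (s v)%:R.

Definition edge_cut K s : R := \sum_v \sum_w K v w * occ s v * (1 - occ s w).

Definition hcoupling (Jt : R) (v w : 'I_T) : R := coupling Jt N (hdist N n v w).

Lemma occ_itv s v : 0 <= occ s v <= 1.
Proof. by rewrite /occ; case: (s v); rewrite ?lexx ?ler01. Qed.

Lemma ham_sub_minus Jt h s :
  ham Jt h s - ham Jt h (minus_config N n) = edge_cut (hcoupling Jt) s - h * \sum_v occ s v.
Proof.
have spin_minus v : spin (minus_config N n v) = -1 :> R by rewrite ffunE.
rewrite /ham /edge_cut.
rewrite (@sum_ord_pairs _ _ (fun v w => hcoupling Jt v w * occ s v * (1 - occ s w))); last first.
  by move=> v; rewrite /occ; case: (s v) => /=; ring.
set Cs := \sum_v \sum_(w | _) _; set Cm := \sum_v \sum_(w | _) _.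
set C := \sum_v \sum_(w | _) _.
have eC : Cs - Cm = -2 * C.
  rewrite -sumrB mulr_sumr; apply: eq_bigr => v _.
  rewrite -sumrB mulr_sumr; apply: eq_bigr => w _.
  rewrite /hcoupling hdist_sym !spin_minus /occ /spin.
  by case: (s v); case: (s w) => /=; ring.
have eM : \sum_v spin (s v) - \sum_v spin (minus_config N n v) = 2 * \sum_v occ s v :> R.
  rewrite -sumrB mulr_sumr; apply: eq_bigr => v _.
  by rewrite spin_minus /occ /spin; case: (s v) => /=; ring.
set Ss := \sum_v spin (s v); set Sm := \sum_v spin _.
have -> : - (1 / 2) * Cs - h / 2 * Ss - (- (1 / 2) * Cm - h / 2 * Sm)
    = - (1 / 2) * (Cs - Cm) - h / 2 * (Ss - Sm) by ring.
by rewrite eC eM; field.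
Qed.

Lemma edge_cut_le K K' s :
  (forall v w, v != w -> K v w <= K' v w) -> edge_cut K s <= edge_cut K' s.
Proof.
move=> leKK'; apply: ler_sum => v _; apply: ler_sum => w _.
case: (eqVneq v w) => [<-|vw].
  have occ_idem : occ s v * (1 - occ s v) = 0 by rewrite /occ; case: (s v) => /=; ring.
  by rewrite -!mulrA occ_idem !mulr0.
have /andP[ov0 _] := occ_itv s v; have /andP[_ ow1] := occ_itv s w.
by rewrite ler_wpM2r ?subr_ge0 // ler_wpM2r // leKK'.
Qed.

Lemma edge_cut_ge0 K s : (forall v w, 0 <= K v w) -> 0 <= edge_cut K s.
Proof.
move=> K0; apply: sumr_ge0 => v _; apply: sumr_ge0 => w _.
have /andP[ov0 _] := occ_itv s v; have /andP[_ ow1] := occ_itv s w.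
by rewrite !mulr_ge0 ?subr_ge0.
Qed.

Lemma edge_cut_sum I (r : seq I) (a : I -> R) (K : I -> 'I_T -> 'I_T -> R) s :
  edge_cut (fun v w => \sum_(i <- r) a i * K i v w) s
  = \sum_(i <- r) a i * edge_cut (K i) s.
Proof.
rewrite /edge_cut; symmetry; under eq_bigr do rewrite mulr_sumr.
rewrite exchange_big; apply: eq_bigr => v _.
under eq_bigr do rewrite mulr_sumr.
rewrite exchange_big; apply: eq_bigr => w _.
by rewrite !mulr_suml; apply: eq_bigr => i _; ring.
Qed.

Definition blk k (v w : 'I_T) : R := (v %/ N ^ k == w %/ N ^ k)%N%:R.

Lemma blk_ge0 k v w : 0 <= blk k v w.
Proof. exact: ler0n. Qed.

Lemma sum_levels_blk (a : nat -> R) (v w : 'I_T) : v != w ->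
  \sum_(1 <= k < n.+1) a k * blk k v w = \sum_(hdist N n v w <= k < n.+1) a k.
Proof.
move=> vw; have d_gt0 := hdist_gt0 (ltn_ord v) (ltn_ord w) vw.
have d_le := hdist_le (ltn_ord v) (ltn_ord w).
rewrite (big_cat_nat d_gt0) /=; last exact: leqW.
rewrite big_nat_cond big1 ?add0r; last first.
  move=> k /andP[/andP[_ kd] _]; have kn : (k <= n)%N by rewrite ltnW ?(leq_trans kd).
  by rewrite /blk -(hdist_leqE (ltn_ord v) (ltn_ord w) kn) leqNgt kd mulr0.
apply: eq_big_nat => k /andP[dk kn].
by rewrite /blk -(hdist_leqE (ltn_ord v) (ltn_ord w)) ?dk ?mulr1 // -ltnS.
Qed.

Hypothesis N_gt0 : (0 < N)%N.

Lemma sum_blk k v : (k <= n)%N -> \sum_w blk k v w = (N ^ k)%:R.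
Proof.
move=> kn; set K := (N ^ k)%N; set q := (v %/ K)%N.
have K_gt0 : (0 < K)%N by rewrite expn_gt0 N_gt0.
under eq_bigr do rewrite /blk -/K eq_sym divn_eq_itv //.
rewrite -/q (sum_ord_indicator _ _ (fun i => q * K <= i < q * K + K)%N).
rewrite count_iota_itv add0n; congr _%:R.
have T_eq : T = (N ^ (n - k) * K)%N by rewrite -expnD subnK.
have : (q < N ^ (n - k))%N by rewrite ltn_divLR // -T_eq.
rewrite -(leq_pmul2r K_gt0) -T_eq mulSn addnC; lia.
Qed.

Lemma edge_cut_blk_ge k s : (k <= n)%N ->
  (\sum_v occ s v) * ((N ^ k)%:R - \sum_v occ s v) <= edge_cut (blk k) s.
Proof.
move=> kn; rewrite /edge_cut mulr_suml; apply: ler_sum => v _.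
have -> : \sum_w blk k v w * occ s v * (1 - occ s w)
    = occ s v * ((N ^ k)%:R - \sum_w blk k v w * occ s w).
  by rewrite -(sum_blk v kn) -sumrB mulr_sumr; apply: eq_bigr => w _; ring.
have /andP[ov0 _] := occ_itv s v; rewrite ler_wpM2l // lerB //.
apply: ler_sum => w _; have /andP[ow0 _] := occ_itv s w.
by rewrite ler_piMl // /blk; case: eqP.
Qed.

End Cuts.

Definition nplus N n (s : config N n) : nat := #|[set v | s v]|.

Section Counting.
Variables (N n : nat).
Local Notation T := (N ^ n)%N.
Implicit Types s t : config N n.

Lemma card_classic_set (P : pred 'I_T) :
  #|[set v | P v]%classic| = #|[set v | P v]|.
Proof. by apply: eq_card => v; rewrite inE; apply/idP/idP => [/set_mem | /mem_set]. Qed.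

Lemma sum_occ_nplus (R : realFieldType) s : \sum_v occ R s v = (nplus s)%:R.
Proof.
rewrite /occ -natr_sum /nplus -sum1dep_card; congr _%:R.
by rewrite [RHS]big_mkcond; apply: eq_bigr => v _; case: (s v).
Qed.

Lemma nplus_flip s t : flip_step s t -> (nplus t <= nplus s + 1)%N.
Proof.
rewrite /flip_step card_classic_set => /eqP <-.
rewrite /nplus (leq_trans _ (leq_card_setU _ _)) // subset_leq_card //.
by apply/fintype.subsetP => v; rewrite !inE; case: (s v); case: (t v).
Qed.

Lemma nplus_minus : nplus (minus_config N n) = 0%N.
Proof. by apply/eqP; rewrite cards_eq0; apply/eqP/setP => v; rewrite !inE ffunE. Qed.

Lemma nplus_plus : nplus (plus_config N n) = T.
Proof.
rewrite /nplus (_ : [set v | _] = [set: 'I_T]%SET) ?cardsT ?card_ord //.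
by apply/setP => v; rewrite !inE ffunE.
Qed.

End Counting.

Definition segment N n (j : nat) : config N n := [ffun v : 'I_(N ^ n) => (v < j)%N].

Definition segment_walk N n := [seq segment N n j | j <- iota 1 (N ^ n)].

Section Segments.
Variables (N n : nat).
Local Notation T := (N ^ n)%N.

Lemma sum_occ_segment (R : realFieldType) j : (j <= T)%N ->
  \sum_v occ R (segment N n j) v = j%:R.
Proof.
move=> jT; under eq_bigr do rewrite /occ ffunE.
rewrite (sum_ord_indicator _ _ (fun i => 0 <= i < j)%N) count_iota_itv.
by congr _%:R; lia.
Qed.

Lemma segment0 : segment N n 0 = minus_config N n.
Proof. by apply/ffunP => v; rewrite !ffunE. Qed.

Lemma segmentT : segment N n T = plus_config N n.
Proof. by apply/ffunP => v; rewrite !ffunE ltn_ord. Qed.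

Lemma segment_flip j : (j < T)%N -> flip_step (segment N n j) (segment N n j.+1).
Proof.
move=> jT; rewrite /flip_step card_classic_set.
rewrite (_ : [set v | _] = [set Ordinal jT]) ?cards1 //.
apply/setP => v; rewrite !inE !ffunE ltnS -val_eqE /=.
by case: (ltngtP v j).
Qed.

Lemma segment_path j k : (j + k <= T)%N ->
  path (@flip_step N n) (segment N n j) [seq segment N n i | i <- iota j.+1 k].
Proof.
elim: k j => [|k IH] j //= jkT.
by rewrite segment_flip ?IH //; lia.
Qed.

Lemma segment_walk_path :
  path (@flip_step N n) (minus_config N n) (segment_walk N n).
Proof. by rewrite -segment0 segment_path. Qed.

Lemma segment_walk_last : last (minus_config N n) (segment_walk N n) = plus_config N n.
Proof. by rewrite -segment0 last_map last_iota segmentT. Qed.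

End Segments.

Section LevelDecomposition.
Variables (R : realFieldType) (N n : nat) (Jt : R).
Hypotheses (N_gt0 : (0 < N)%N) (Jt_ge0 : 0 <= Jt).
Local Notation T := (N ^ n)%N.
Local Notation x := (N%:R^-1 : R).
Implicit Types s : config N n.

Definition level_weight k : R := Jt * (x ^+ k - x ^+ k.+1).

Lemma level_weight_ge0 k : 0 <= level_weight k.
Proof.
have x_ge0 : 0 <= x by rewrite invr_ge0 ler0n.
have x_le1 : x <= 1 by rewrite invf_le1 ?ler1n ?ltr0n.
by rewrite mulr_ge0 // subr_ge0 exprS ler_piMl ?exprn_ge0.
Qed.

Lemma level_weight_block k : level_weight k * (N ^ k)%:R = Jt * (1 - x).
Proof.
have xN : x * N%:R = 1 by rewrite mulVf // pnatr_eq0 -lt0n.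
by rewrite /level_weight natrX -mulrA mulrBl exprS -mulrA -exprMn xN expr1n mulr1.
Qed.

Lemma sum_level_weight a b : (a <= b)%N ->
  \sum_(a <= k < b) level_weight k = Jt * (x ^+ a - x ^+ b).
Proof.
move=> ab; rewrite -mulr_sumr (@telescope_sumr_eq _ _ _ (fun k => - x ^+ k)) //.
  by rewrite opprK addrC.
by move=> k _; rewrite opprK addrC.
Qed.

Lemma hcoupling_ge_levels (v w : 'I_T) : v != w ->
  \sum_(1 <= k < n.+1) level_weight k * blk R k v w <= hcoupling Jt v w.
Proof.
move=> vw; rewrite sum_levels_blk // sum_level_weight; last first.
  exact/leqW/(hdist_le (ltn_ord v) (ltn_ord w)).
rewrite /hcoupling /coupling -exprVn mulrBr gerBl mulr_ge0 // exprn_ge0 //.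
by rewrite invr_ge0 ler0n.
Qed.

Lemma hcoupling_le_levels (v w : 'I_T) : v != w ->
  hcoupling Jt v w <= \sum_(1 <= k < n.+1) coupling Jt N k * blk R k v w.
Proof.
move=> vw; rewrite sum_levels_blk // big_ltn ?ltnS ?(hdist_le (ltn_ord v) (ltn_ord w)) //.
rewrite lerDl sumr_ge0 // => k _.
by rewrite /coupling divr_ge0 ?exprn_ge0 ?ler0n.
Qed.

Lemma edge_cut_hcoupling_ge s m : (m < n)%N ->
  (\sum_v occ R s v) * (Jt * (1 - x)) *+ (n - m)
    - (\sum_v occ R s v) ^+ 2 * (Jt * (x ^+ m.+1 - x ^+ n.+1))
  <= edge_cut (hcoupling Jt) s.
Proof.
move=> mn; set c := \sum_v occ R s v.
apply: le_trans (edge_cut_le s hcoupling_ge_levels); rewrite edge_cut_sum.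
rewrite (big_cat_nat (n := m.+1)) //=; last by rewrite ltnS ltnW.
apply: ler_wpDl.
  apply: sumr_ge0 => k _; apply: mulr_ge0; first exact: level_weight_ge0.
  exact/edge_cut_ge0/blk_ge0.
have -> : c * (Jt * (1 - x)) *+ (n - m) - c ^+ 2 * (Jt * (x ^+ m.+1 - x ^+ n.+1))
    = \sum_(m.+1 <= k < n.+1) level_weight k * (c * ((N ^ k)%:R - c)).
  rewrite (eq_big_nat _ _ (F2 := fun k => c * (Jt * (1 - x)) - c ^+ 2 * level_weight k)).
    by rewrite sumrB sumr_const_nat -mulr_sumr sum_level_weight ?subSS // ltnS ltnW.
  by move=> k _; rewrite -(level_weight_block k); ring.
apply: ler_sum_nat => k /andP[_ kn]; rewrite ler_wpM2l ?level_weight_ge0 //.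
by apply: edge_cut_blk_ge; rewrite -ltnS.
Qed.

Lemma excess_energy_ge s m alpha : (m < n)%N ->
  Jt * (alpha * (\sum_v occ R s v) - (n%:R - m%:R) * (\sum_v occ R s v) / N%:R
        - (\sum_v occ R s v) ^+ 2 / N%:R ^+ m.+1)
  <= edge_cut (hcoupling Jt) s - Jt * (n%:R - m%:R - alpha) * \sum_v occ R s v.
Proof.
move=> mn; apply: le_trans (lerB (edge_cut_hcoupling_ge s mn) (lexx _)).
set c := \sum_v occ R s v; rewrite -subr_ge0 -mulr_natr natrB ?(ltnW mn) // -exprVn.
have -> : c * (Jt * (1 - x)) * (n%:R - m%:R) - c ^+ 2 * (Jt * (x ^+ m.+1 - x ^+ n.+1))
    - Jt * (n%:R - m%:R - alpha) * c
    - Jt * (alpha * c - (n%:R - m%:R) * c * x - c ^+ 2 * x ^+ m.+1)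
  = c ^+ 2 * (Jt * x ^+ n.+1) by ring.
by rewrite mulr_ge0 ?sqr_ge0 ?mulr_ge0 ?exprn_ge0 ?invr_ge0 ?ler0n.
Qed.

End LevelDecomposition.

Lemma parabola_le (R : realFieldType) (a M r : R) : 0 < M ->
  r * (M - r) / M - (1 - a) * r <= a ^+ 2 * M / 4.
Proof.
move=> M_gt0; rewrite -subr_ge0.
have -> : a ^+ 2 * M / 4 - (r * (M - r) / M - (1 - a) * r) = (a * M - 2 * r) ^+ 2 / (4 * M).
  by field; rewrite gt_eqF.
by rewrite divr_ge0 ?sqr_ge0 // mulr_ge0 // ltW.
Qed.

Definition segment_block_cut (R : realFieldType) (N j k : nat) : R :=
  (j %% N ^ k)%:R * ((N ^ k)%:R - (j %% N ^ k)%:R) / (N ^ k)%:R.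

Section SegmentBounds.
Variables (R : realFieldType) (N n : nat).
Hypothesis N_gt0 : (0 < N)%N.
Local Notation T := (N ^ n)%N.

Lemma edge_cut_blk_segment_le k j : (j <= T)%N ->
  edge_cut (blk R k) (segment N n j) <= (j %% N ^ k)%:R * ((N ^ k)%:R - (j %% N ^ k)%:R).
Proof.
move=> jT; set K := (N ^ k)%N; set q := (j %/ K)%N.
have K_gt0 : (0 < K)%N by rewrite expn_gt0 N_gt0.
have hj : (q * K <= j < q * K + K)%N by rewrite -divn_eq_itv.
have le_ind (v w : 'I_T) :
    blk R k v w * occ R (segment N n j) v * (1 - occ R (segment N n j) w)
    <= (q * K <= v < j)%N%:R * (j <= w < q * K + K)%N%:R.
  rewrite /blk /occ !ffunE -/K; case: (ltnP v j) => vj; case: (ltnP w j) => wj;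
    rewrite /= ?subrr ?mulr0 ?mul0r ?subr0 ?mulr1 ?mulr_ge0 ?ler0n //.
  case: eqP => [e|_]; last by rewrite mulr_ge0 ?ler0n.
  have vq : (v %/ K <= q)%N by rewrite leq_div2r // ltnW.
  have qw : (q <= w %/ K)%N by rewrite leq_div2r.
  have wK : (w %/ K == q)%N by rewrite eqn_leq qw andbT -e.
  have vK : (v %/ K == q)%N by rewrite e.
  rewrite divn_eq_itv // in wK; rewrite divn_eq_itv // in vK.
  by case/andP: vK => -> _; case/andP: wK => _ ->; rewrite mulr1.
rewrite (le_trans (ler_sum _ (fun v _ => ler_sum _ (fun w _ => le_ind v w)))) //.
rewrite -big_distrlr /= (sum_ord_indicator _ _ (fun i => q * K <= i < j)%N).
rewrite (sum_ord_indicator _ _ (fun i => j <= i < q * K + K)%N) !count_iota_itv !add0n.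
have j_mod : (j %% K = j - q * K)%N by rewrite {2}(divn_eq j K) addKn.
rewrite j_mod -natrB; last lia.
by rewrite -!natrM ler_nat leq_mul //; lia.
Qed.

Lemma segment_block_cut_le_mod j k : segment_block_cut R N j k <= (j %% N ^ k)%:R.
Proof.
have K_gt0 : 0 < (N ^ k)%:R :> R by rewrite ltr0n expn_gt0 N_gt0.
rewrite /segment_block_cut ler_pdivrMr // mulrBr lerBlDr lerDl.
by rewrite mulr_ge0 ?ler0n.
Qed.

Lemma sum_segment_block_cut_le j m : (m < n)%N ->
  \sum_(1 <= k < n.+1) segment_block_cut R N j k
  <= m%:R * (N ^ m)%:R + segment_block_cut R N j m.+1 + (n - m.+1)%:R * j%:R.
Proof.
move=> mn; rewrite (big_cat_nat (n := m.+1)) //=; last by rewrite ltnS ltnW.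
rewrite [X in _ + X]big_ltn ?ltnS // addrA; apply: lerD; first apply: lerD => //.
- rewrite mulr_natl -[m in _ *+ m](subn1 m.+1) -sumr_const_nat.
  apply: ler_sum_nat => k /andP[_ km].
  apply: le_trans (segment_block_cut_le_mod j k) _; rewrite ler_nat ltnW //.
  by rewrite (leq_trans (ltn_pmod _ _)) ?expn_gt0 ?N_gt0 // leq_pexp2l // -ltnS.
- rewrite mulr_natl -[(n - m.+1)%N]/(n.+1 - m.+2)%N -sumr_const_nat.
  apply: ler_sum_nat => k _.
  by apply: le_trans (segment_block_cut_le_mod j k) _; rewrite ler_nat leq_mod.
Qed.

Variable Jt : R.
Hypothesis Jt_ge0 : 0 <= Jt.

Lemma edge_cut_segment_le j : (j <= T)%N ->
  edge_cut (hcoupling Jt) (segment N n j)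
  <= Jt * \sum_(1 <= k < n.+1) segment_block_cut R N j k.
Proof.
move=> jT; apply: le_trans (edge_cut_le _ (hcoupling_le_levels Jt_ge0)) _.
rewrite edge_cut_sum mulr_sumr; apply: ler_sum_nat => k _.
rewrite /segment_block_cut /coupling -natrX [X in _ <= X]mulrA [X in _ <= X]mulrAC.
rewrite ler_wpM2l ?divr_ge0 ?ler0n //.
exact: edge_cut_blk_segment_le.
Qed.

Lemma excess_energy_segment_le j m alpha : (j <= T)%N -> (m < n)%N -> alpha <= 1 ->
  edge_cut (hcoupling Jt) (segment N n j) - Jt * (n%:R - m%:R - alpha) * j%:R
  <= Jt * (alpha ^+ 2 * (N ^ m.+1)%:R / 4 + m%:R * (N ^ m)%:R).
Proof.
move=> jT mn alpha_le1; apply: le_trans (lerB (edge_cut_segment_le jT) (lexx _)) _.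
rewrite -mulrA -mulrBr ler_wpM2l //.
have levels := sum_segment_block_cut_le j mn; rewrite natrB // in levels.
have M_gt0 : 0 < (N ^ m.+1)%:R :> R by rewrite ltr0n expn_gt0 N_gt0.
have peak := parabola_le alpha (j %% N ^ m.+1)%:R M_gt0.
have mod_le : (j %% N ^ m.+1)%:R <= j%:R :> R by rewrite ler_nat leq_mod.
rewrite /segment_block_cut in levels; nra.
Qed.

End SegmentBounds.

Section Paths.
Variables (R : realFieldType) (N n : nat) (Jt h : R).
Local Notation T := (N ^ n)%N.
Implicit Types (s : config N n) (p : seq (config N n)).

Lemma path_max_ge s p x : x \in s :: p -> ham Jt h x <= path_max Jt h s p.
Proof.
rewrite inE => /predU1P[->|xp]; first exact: bigmax_ge_id.
exact: le_bigmax_seq.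
Qed.

Lemma path_max_le s p B :
  {in s :: p, forall x, ham Jt h x <= B} -> path_max Jt h s p <= B.
Proof.
move=> le_B; rewrite /path_max big_seq; apply: bigmax_le => [|x xp].
  by rewrite le_B ?mem_head.
by rewrite le_B // inE xp orbT.
Qed.

End Paths.

Section CommunicationHeight.
Variables (R : realType) (N n : nat) (Jt h : R).
Local Notation T := (N ^ n)%N.
Local Notation Phi := (comm_height Jt h (minus_config N n) (plus_config N n)).
Local Notation heights := [set x : R | exists p : seq (config N n),
  [/\ path (@flip_step N n) (minus_config N n) p,
      last (minus_config N n) p = plus_config N n
    & x = path_max Jt h (minus_config N n) p]]%classic.

Lemma heights_segment_walk : heights (path_max Jt h (minus_config N n) (segment_walk N n)).
Proof.
by exists (segment_walk N n); split; rewrite ?segment_walk_path ?segment_walk_last.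
Qed.

Lemma comm_height_ge k B : (k <= T)%N ->
  (forall x : config N n, nplus x = k -> B <= ham Jt h x) -> B <= Phi.
Proof.
move=> kT B_le; apply: lb_le_inf; first by eexists; exact: heights_segment_walk.
move=> _ [p [walk p_last ->]].
have [|x xp nx] := path_crosses walk (@nplus_flip N n) (k := k).
  by rewrite p_last nplus_minus nplus_plus kT.
exact: le_trans (B_le x nx) (path_max_ge _ _ xp).
Qed.

Lemma comm_height_le B :
  (forall j, (j <= T)%N -> ham Jt h (segment N n j) <= B) -> Phi <= B.
Proof.
move=> le_B.
have lb : has_lbound heights.
  exists (ham Jt h (minus_config N n)) => _ [p [_ _ ->]].
  exact/path_max_ge/mem_head.
apply: le_trans (ge_inf lb heights_segment_walk) _.
apply: path_max_le => x; rewrite inE => /predU1P[->|/mapP[j]].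
  by rewrite -segment0 le_B.
by rewrite mem_iota => /andP[_ jT] ->; rewrite le_B // -ltnS.
Qed.

End CommunicationHeight.

Section GammaStarBounds.
Variables (R : realType) (n : nat) (Jt : R) (m : nat) (alpha : R).
Hypotheses (mn : (m < n)%N) (Jt_ge0 : 0 <= Jt).
Local Notation h := (Jt * (n%:R - m%:R - alpha)).

Lemma Gamma_star_ge N j : (0 < N)%N -> (j <= N ^ n)%N ->
  Jt * (alpha * j%:R - (n%:R - m%:R) * j%:R / N%:R - j%:R ^+ 2 / N%:R ^+ m.+1)
  <= Gamma_star N n Jt h.
Proof.
move=> N_gt0 jT; rewrite /Gamma_star lerBrDr; apply: (comm_height_ge jT) => x nx.
rewrite -lerBrDr ham_sub_minus.
by have := excess_energy_ge N_gt0 Jt_ge0 x alpha mn; rewrite sum_occ_nplus nx.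
Qed.

Lemma Gamma_star_le N : (0 < N)%N -> alpha <= 1 ->
  Gamma_star N n Jt h <= Jt * (alpha ^+ 2 * (N ^ m.+1)%:R / 4 + m%:R * (N ^ m)%:R).
Proof.
move=> N_gt0 alpha_le1; rewrite /Gamma_star lerBlDr; apply: comm_height_le => j jT.
rewrite -lerBlDr ham_sub_minus sum_occ_segment //.
exact: excess_energy_segment_le.
Qed.

End GammaStarBounds.

Local Open Scope classical_set_scope.

Lemma cvg_div_nat (R : realType) (c : R) : (fun N : nat => c / N%:R) @ \oo --> 0.
Proof.
have inv_cvg : (fun N : nat => N%:R^-1 : R) @ \oo --> 0.
  apply/gtr0_cvgV0; last exact: cvgr_idn.
  by near=> N; rewrite ltr0n; near: N; exists 1%N.
by rewrite -(mulr0 c); apply: cvgM => //; exact: cvg_cst.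
Unshelve. all: by end_near.
Qed.

Lemma rel_error_le (R : realFieldType) (G D E : R) :
  0 < D -> D - E <= G <= D + E -> `|G / D - 1| <= E / D.
Proof.
move=> D_gt0 /andP[lo hi].
have Dinv_gt0 : 0 < D^-1 by rewrite invr_gt0.
rewrite -(divff (lt0r_neq0 D_gt0)) -mulrBl normrM (gtr0_norm Dinv_gt0) ler_pM2r //.
by rewrite ler_norml; apply/andP; split; lra.
Qed.

Lemma trunc_quadratic_ge (R : realFieldType) (a M s : R) : 0 < M -> 0 <= s ->
  s <= a * M / 2 < s + 1 -> a ^+ 2 * M / 4 - a / 2 <= a * s - s ^+ 2 / M.
Proof.
move=> M_gt0 s_ge0 /andP[lo hi]; rewrite -subr_ge0; set w := a * M / 2 in lo hi *.
have -> : a * s - s ^+ 2 / M - (a ^+ 2 * M / 4 - a / 2) = (w - (w - s) ^+ 2) / M.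
  by rewrite /w; field; rewrite gt_eqF.
rewrite divr_ge0 ?(ltW M_gt0) // subr_ge0.
have ws_le1 : w - s <= 1 by lra.
have ws_ge0 : 0 <= w - s by lra.
by rewrite (le_trans _ (_ : w - s <= w)) ?expr2 ?ler_piMl //; lra.
Qed.

Lemma leading_lower_bound (R : realFieldType) (Jt a Q Nr s mr nr : R) :
  0 <= Jt -> 0 <= a -> 1 <= Q -> 1 <= Nr -> 0 <= mr <= nr -> 0 <= s ->
  s <= a * (Q * Nr) / 2 < s + 1 ->
  Jt / 4 * a ^+ 2 * (Q * Nr) - Jt * Q * (mr + a * (nr + 1) / 2)
  <= Jt * (a * s - (nr - mr) * s / Nr - s ^+ 2 / (Q * Nr)).
Proof.
move=> Jt_ge0 a_ge0 Q_ge1 Nr_ge1 /andP[mr_ge0 mr_le] s_ge0 s_itv.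
have M_gt0 : 0 < Q * Nr by apply: mulr_gt0; lra.
have quad := trunc_quadratic_ge M_gt0 s_ge0 s_itv.
have lin : (nr - mr) * s / Nr <= nr * (a * Q) / 2.
  rewrite ler_pdivrMr; last lra.
  apply: (le_trans (y := nr * s)); first by apply: ler_wpM2r => //; lra.
  have -> : nr * (a * Q) / 2 * Nr = nr * (a * (Q * Nr) / 2) by ring.
  by case/andP: s_itv => s_le _; apply: ler_wpM2l => //; lra.
have aQ : a <= a * Q by rewrite ler_peMr.
have mQ : 0 <= Q * mr by rewrite mulr_ge0 //; lra.
have -> : Jt / 4 * a ^+ 2 * (Q * Nr) - Jt * Q * (mr + a * (nr + 1) / 2)
    = Jt * (a ^+ 2 * (Q * Nr) / 4 - Q * mr - nr * (a * Q) / 2 - a * Q / 2) by ring.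
by rewrite ler_wpM2l //; lra.
Qed.

Section GammaStarAsymptotics.
Variables (R : realType) (n : nat) (Jt : R) (m : nat) (alpha : R).
Hypotheses (mn : (m < n)%N) (Jt_gt0 : 0 < Jt).
Hypotheses (alpha_gt0 : 0 < alpha) (alpha_lt1 : alpha < 1).
Local Notation h := (Jt * (n%:R - m%:R - alpha)).
Local Notation D N := (Jt / 4 * alpha ^+ 2 * N%:R ^+ m.+1).
Local Notation E N := (Jt * N%:R ^+ m * (m%:R + alpha * (n%:R + 1) / 2)).

Lemma Gamma_star_ge_leading N : (0 < N)%N -> D N - E N <= Gamma_star N n Jt h.
Proof.
move=> N_gt0; have N_ge1 : 1 <= N%:R :> R by rewrite ler1n.
have Q_ge1 : 1 <= N%:R ^+ m :> R by rewrite exprn_ege1.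
have w_ge0 : 0 <= alpha * (N%:R ^+ m * N%:R) / 2.
  by rewrite divr_ge0 // !mulr_ge0 ?exprn_ge0 ?ler0n // ltW.
(* [j] maximizes the lower bound of [excess_energy_ge] over the number of + sites. *)
have /andP[j_le j_gt] := truncn_itv w_ge0; set j := Num.truncn _ in j_le j_gt.
have jT : (j <= N ^ n)%N.
  have : (j < N ^ m.+1)%N.
    rewrite -(ltr_nat R) natrX exprSr; apply: le_lt_trans j_le _.
    have M_gt0 : 0 < N%:R ^+ m * N%:R :> R by rewrite mulr_gt0 ?exprn_gt0 ?ltr0n.
    by rewrite ltr_pdivrMr // mulrC ltr_pM2l // (lt_le_trans alpha_lt1) ?ler1n.
  by move/ltnW/leq_trans; apply; rewrite leq_pexp2l.
apply: le_trans (Gamma_star_ge alpha mn (ltW Jt_gt0) N_gt0 jT).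
rewrite !(exprSr (N%:R) m) leading_lower_bound ?ler0n ?ler_nat ?(ltnW mn) //;
  try exact: ltW.
by rewrite j_le natr1.
Qed.

Lemma Gamma_star_le_leading N : (0 < N)%N -> Gamma_star N n Jt h <= D N + E N.
Proof.
move=> N_gt0; apply: le_trans (Gamma_star_le mn (ltW Jt_gt0) N_gt0 (ltW alpha_lt1)) _.
rewrite !natrX -subr_ge0.
have -> : D N + E N - Jt * (alpha ^+ 2 * N%:R ^+ m.+1 / 4 + m%:R * N%:R ^+ m)
    = Jt * N%:R ^+ m * (alpha * (n%:R + 1) / 2) by ring.
have alpha_ge0 := ltW alpha_gt0; have Jt_ge0 := ltW Jt_gt0.
apply: mulr_ge0; first by rewrite mulr_ge0 // exprn_ge0.
by rewrite divr_ge0 // mulr_ge0 // addr_ge0.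
Qed.

Lemma Gamma_star_rel_error N : (0 < N)%N ->
  `|Gamma_star N n Jt h / D N - 1|
  <= (4 * m%:R + 2 * alpha * (n%:R + 1)) / alpha ^+ 2 / N%:R.
Proof.
move=> N_gt0; have N_neq0 : N%:R != 0 :> R by rewrite pnatr_eq0 -lt0n.
have D_gt0 : 0 < D N.
  apply: mulr_gt0; last by rewrite exprn_gt0 // ltr0n.
  by rewrite mulr_gt0 ?exprn_gt0 // divr_gt0.
have -> : (4 * m%:R + 2 * alpha * (n%:R + 1)) / alpha ^+ 2 / N%:R = E N / D N.
  rewrite (exprSr (N%:R) m); field.
  by rewrite N_neq0 expf_neq0 // !gt_eqF.
apply: (rel_error_le D_gt0).
by rewrite Gamma_star_ge_leading ?Gamma_star_le_leading.
Qed.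

End GammaStarAsymptotics.

Theorem corollary1p12 (R : realType) (n : nat) (Jt : R) (m : nat) (alpha : R) :
  (1 <= n)%N -> 0 < Jt -> (m <= n - 1)%N -> 0 < alpha < 1 ->
  (fun N : nat =>
     Gamma_star N n Jt (Jt * (n%:R - m%:R - alpha))
     / (Jt / 4 * alpha ^+ 2 * (N%:R) ^+ (m + 1)))
    @ \oo --> (1 : R).
Proof.
move=> n_ge1 Jt_gt0 m_le /andP[alpha_gt0 alpha_lt1]; have mn : (m < n)%N by lia.
set C := (4 * m%:R + 2 * alpha * (n%:R + 1)) / alpha ^+ 2.
apply: (@squeeze_cvgr _ _ _ _ (fun N : nat => 1 - C / N%:R) (fun N : nat => 1 + C / N%:R)).
- near=> N; rewrite addn1 -ler_distl.
  by apply: Gamma_star_rel_error; near: N; exists 1%N.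
- by rewrite -[X in _ --> X]subr0; apply: cvgB; [exact: cvg_cst | exact: cvg_div_nat].
- by rewrite -[X in _ --> X]addr0; apply: cvgD; [exact: cvg_cst | exact: cvg_div_nat].
Unshelve. all: by end_near.
Qed.
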